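(* Let $m,n\ge 2$ and let $W$ be a channel from $\{1,\dots,m\}$ to $\{1,\dots,n\}$. Let $g=\max_{1\le j\le n}(\mathbf{1}W)_j$. Then $\underline{P}_W(1)=(g-m+1)_+$. If $\underline{P}_W(1)>0$ or $m=2$ or $n=2$, then $\overline{C}_{11}(W)=1-\underline{P}_W(1)$; otherwise \[ \log_2\gamma\le \overline{C}_{11}(W)\le \log_2(o-1)+\overline{P}_W(o)\log_2\frac{o}{o-1}, \] where $o=m\wedge n$, $a=\lfloor\mathbf{1}W\rfloor$, $b=\lceil \mathbf{1}W\rceil$ (entrywise), and $\gamma=\mathrm{w}(a)+\big(m-\sum_{j\in\mathrm{supp}(a)}b_j\big)_+$. Moreover, if $m\le n$ and $\mathbf{1}W\le\mathbf{1}'$ entrywise then $\overline{C}_{11}(W)=\log_2 m$, and if $m\ge n$ and $\mathbf{1}W\ge \mathbf{1}'$ entrywise then $\overline{C}_{11}(W)=\log_2 n$, where $\mathbf{1}'$ is the all-one vector of length $n$.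
   Context: A channel from $\mathcal{X}=\{1,\dots,m\}$ to $\mathcal{Y}=\{1,\dots,n\}$ is an $m\times n$ row-stochastic matrix $W=(W_{x,y})$. A deterministic channel is a channel whose entries are all $0$ or $1$ (identified with a map $\mathcal{X}\to\mathcal{Y}$). $\mathcal{D}$ is the set of all deterministic channels, $\mathrm{rank}(D)$ is the matrix rank. $\Lambda(W)=\{\lambda \text{ probability distribution on }\mathcal{D}: W=\sum_{D}\lambda_D D\}$. $C_{11}(\lambda)=\sum_D\lambda_D\log_2\mathrm{rank}(D)$ and $\overline{C}_{11}(W)=\sup\{C_{11}(\lambda):\lambda\in\Lambda(W)\}$. $P_\lambda(r)=\lambda(\{D:\mathrm{rank}(D)=r\})$, $\underline{P}_W(r)=\min_{\lambda\in\Lambda(W)}P_\lambda(r)$, $\overline{P}_W(r)=\max_{\lambda\in\Lambda(W)}P_\lambda(r)$. $\mathbf{1}$ is the all-one row vector of length $m$ (so $\mathbf{1}W$ is the vector of column sums). $\mathrm{w}(a)$ is the number of nonzero entries of $a$, $\mathrm{supp}(a)$ the set of indices of nonzero entries, $(x)_+=\max(x,0)$, $x\wedge y=\min(x,y)$. *)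

From HB Require Import structures.
From mathcomp Require Import all_boot all_order all_algebra.
From mathcomp Require Import all_classical all_reals all_analysis.
Set Implicit Arguments. Unset Strict Implicit. Unset Printing Implicit Defensive.
Import Order.TTheory GRing.Theory Num.Theory.
Local Open Scope classical_set_scope.
Local Open Scope ring_scope.

Section Channels.
Variable R : realType.
Variables m n : nat.

Definition log2 (x : R) : R := ln x / ln 2.

Definition is_channel (W : 'M[R]_(m, n)) : Prop :=
  (forall x y, 0 <= W x y) /\ (forall x, \sum_y W x y = 1).

(* deterministic channels are identified with maps 'I_m -> 'I_n *)
Definition detmap := {ffun 'I_m -> 'I_n}.

Definition detmx (f : detmap) : 'M[R]_(m, n) :=
  \matrix_(x, y) (f x == y)%:R.

Definition is_distr (l : {ffun detmap -> R}) : Prop :=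
  (forall f, 0 <= l f) /\ \sum_f l f = 1.

Definition Lambda (W : 'M[R]_(m, n)) : set {ffun detmap -> R} :=
  [set l | is_distr l /\ W = \sum_f l f *: detmx f].

Definition C11 (l : {ffun detmap -> R}) : R :=
  \sum_f l f * log2 (\rank (detmx f))%:R.

Definition C11bar (W : 'M[R]_(m, n)) : R := sup [set C11 l | l in Lambda W].

Definition Prank (l : {ffun detmap -> R}) (r : nat) : R :=
  \sum_(f | \rank (detmx f) == r) l f.

(* underline P_W(r) (a min, attained; written as inf) *)
Definition Pmin (W : 'M[R]_(m, n)) (r : nat) : R :=
  inf [set Prank l r | l in Lambda W].

(* overline P_W(r) (a max, attained; written as sup) *)
Definition Pmax (W : 'M[R]_(m, n)) (r : nat) : R :=
  sup [set Prank l r | l in Lambda W].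

Definition colsum (W : 'M[R]_(m, n)) (j : 'I_n) : R := \sum_i W i j.

Definition gmax (W : 'M[R]_(m, n)) : R := \big[Num.max/0]_j colsum W j.

Definition avec (W : 'M[R]_(m, n)) (j : 'I_n) : int := Num.floor (colsum W j).
Definition bvec (W : 'M[R]_(m, n)) (j : 'I_n) : int := Num.ceil (colsum W j).

Definition gammaW (W : 'M[R]_(m, n)) : int :=
  (#|[set j | avec W j != 0]|)%:Z
  + Num.max ((m%:Z) - \sum_(j | avec W j != 0) bvec W j) 0.

End Channels.

From HB Require Import structures.
From mathcomp Require Import all_boot all_order all_algebra.
From mathcomp Require Import all_classical all_reals all_analysis.
From mathcomp Require Import zify ring lra.
Import Order.TTheory GRing.Theory Num.Theory.
Local Open Scope ring_scope.
Set Implicit Arguments. Unset Strict Implicit. Unset Printing Implicit Defensive.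

(* Every channel W is a mixture of deterministic channels f that round the
   column sums of W, i.e. floor (1W)_j <= #|f^-1(j)| <= ceil (1W)_j.  This is a
   Birkhoff-type theorem: as long as W has a fractional entry, there is a
   direction D supported on the fractional entries, with zero row sums and zero
   sums on the columns of integral sum; moving from W along +D and -D until a
   new entry or column sum becomes integral writes W as a convex combination of
   two feasible matrices with fewer fractional coordinates.
   The rank of a deterministic channel is the number of outputs it hits, and it
   is 1 exactly when one output receives all m inputs.  Hence for every
   decomposition (1W)_j <= m - 1 + P(1), with equality for a rounding
   decomposition, which gives the formula for the minimal P(1).  The bounds on
   C11 compare log2 of the rank with affine functions of the indicators of
   rank 1 and rank o, and in the remaining cases the rounding decomposition has
   ranks at least gamma, exactly m, or exactly n. *)

Lemma card_sumb (T : finType) (A : {pred T}) : #|A| = (\sum_t (t \in A : nat))%N.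
Proof. by rewrite -sum1_card big_mkcond /=; apply: eq_bigr => t _; case: (t \in A). Qed.

Lemma sum_gt0_le (I : finType) (P : pred I) (c : I -> nat) :
  (\sum_(i | P i) (0 < c i) <= \sum_(i | P i) c i)%N.
Proof. by apply: leq_sum => i _; case: (c i). Qed.

Lemma double_sum_gt0_le (I : finType) (P : pred I) (c : I -> nat) :
  (forall i, P i -> c i != 1%N) -> (2 * \sum_(i | P i) (0 < c i) <= \sum_(i | P i) c i)%N.
Proof.
by move=> c_neq1; rewrite big_distrr leq_sum // => i /c_neq1; case: (c i) => [|[]].
Qed.

Lemma nontrivial_solution (R : fieldType) (U Q : finType) (c : Q -> U -> R)
    (P : pred U) (E : pred Q) :
  (#|E| < #|P|)%N ->
  exists v : U -> R, [/\ forall u, u \notin P -> v u = 0, exists u, v u != 0 &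
     forall q, q \in E -> \sum_u c q u * v u = 0].
Proof.
move=> E_lt_P.
pose A : 'M[R]_(#|P|, #|E|) := \matrix_(i, k) c (enum_val k) (enum_val i).
have /matrix0Pn [i [k Kik]] : kermx A != 0.
  rewrite -mxrank_eq0 mxrank_ker subn_eq0 -ltnNge.
  exact: leq_ltn_trans (rank_leq_col A) E_lt_P.
have KA0 : row i (kermx A) *m A = 0 by rewrite -row_mul mulmx_ker row0.
pose v u := \sum_(k' < #|P|) (enum_val k' == u)%:R * kermx A i k'.
have vE k' : v (enum_val k') = kermx A i k'.
  rewrite /v (bigD1 k') //= eqxx mul1r big1 ?addr0 // => k'' /negbTE neq_k''.
  by rewrite (inj_eq enum_val_inj) neq_k'' mul0r.
have v_out u : u \notin P -> v u = 0.
  move=> u_notin; rewrite /v big1 // => k' _.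
  by rewrite (_ : _ == u = false) ?mul0r //; apply: contraNF u_notin => /eqP <-; apply: enum_valP.
exists v; split => //.
- by exists (enum_val k); rewrite vE.
- move=> q q_in; rewrite -(big_rmcond P) => [|u u_notin]; last by rewrite v_out ?mulr0.
  rewrite big_enum_val /=.
  transitivity ((row i (kermx A) *m A) 0 (enum_rank_in q_in q)); last by rewrite KA0 mxE.
  rewrite mxE; apply: eq_bigr => k' _.
  by rewrite vE !mxE enum_rankK_in // mulrC.
Qed.

Section Integrality.
Variable R : archiRealFieldType.

Lemma nonint_card_neq1 (I : finType) (F : I -> R) :
  \sum_i F i \is a Num.int -> #|[set i | F i \notin Num.int]| != 1%N.
Proof.
move=> sum_int; apply/negP => /cards1P [i0 nonint_i0].
move: sum_int; rewrite (bigD1 i0) //= => sum_int.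
have : i0 \in [set i | F i \notin Num.int] by rewrite nonint_i0 set11.
rewrite inE => /negP; apply.
rewrite -[F i0](addrK (\sum_(i | i != i0) F i)) rpredB // rpred_sum // => i.
apply: contraNT => nonint_i; have : i \in [set i | F i \notin Num.int] by rewrite inE.
by rewrite nonint_i0 inE.
Qed.

(* The first time s >= 0 at which x + s * d is an integer; it is 0 when d = 0,
   by the convention x / 0 = 0. *)
Definition time_to_int (x d : R) : R :=
  if 0 < d then ((Num.ceil x)%:~R - x) / d else (x - (Num.floor x)%:~R) / - d.

Lemma time_to_int_gt0 x d : x \notin Num.int -> d != 0 -> 0 < time_to_int x d.
Proof.
move=> x_nonint d_neq0; rewrite /time_to_int.
have ceil_gt : x < (Num.ceil x)%:~R.
  by rewrite lt_def ceil_ge andbT; apply: contraNneq x_nonint => <-; apply: intr_int.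
have floor_lt : (Num.floor x)%:~R < x.
  by rewrite lt_def floor_le andbT; apply: contraNneq x_nonint => ->; apply: intr_int.
case: ifP => d_pos; first by rewrite divr_gt0 // subr_gt0.
by rewrite divr_gt0 ?subr_gt0 // oppr_gt0 lt_neqAle d_neq0 leNgt d_pos.
Qed.

Lemma time_to_int_floor_ceil x d s : 0 <= s <= time_to_int x d ->
  (Num.floor x)%:~R <= x + s * d <= (Num.ceil x)%:~R.
Proof.
rewrite /time_to_int; case/andP => s_ge0; case: (ltrgtP d 0) => [d_lt0|d_gt0|->].
- rewrite ler_pdivlMr ?oppr_gt0 // => s_le.
  have : s * d <= 0 by rewrite mulr_ge0_le0 // ltW.
  have := ceil_ge x; nra.
- rewrite ler_pdivlMr // => s_le.
  have : 0 <= s * d by rewrite mulr_ge0 // ltW.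
  have := floor_le x; nra.
- by rewrite mulr0 addr0 floor_le ceil_ge.
Qed.

Lemma time_to_int_int x d : d != 0 -> x + time_to_int x d * d \is a Num.int.
Proof.
move=> d_neq0; rewrite /time_to_int; case: ifP => _.
  by rewrite divfK // addrC subrK intr_int.
by rewrite invrN mulrN mulNr divfK // opprB addrC subrK intr_int.
Qed.

End Integrality.

Section Counts.
Variables m n : nat.
Implicit Types f : detmap m n.

Definition cnt f j := #|[set i | f i == j]|.

Definition rk f := (\sum_j (0 < cnt f j))%N.

Lemma sum_cnt f : (\sum_j cnt f j)%N = m.
Proof.
rewrite -[RHS]card_ord card_sumb; under eq_bigr do rewrite /cnt card_sumb.
rewrite exchange_big /=; apply: eq_bigr => i _.
by rewrite (bigD1 (f i)) //= inE eqxx big1 // => j; rewrite inE eq_sym => /negbTE ->.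
Qed.

Lemma cnt_le f j : (cnt f j <= m)%N.
Proof. by rewrite -[m](sum_cnt f) (bigD1 j) //= leq_addr. Qed.

Lemma sum_cnt_neq f j : (\sum_(k | k != j) cnt f k)%N = (m - cnt f j)%N.
Proof. by rewrite -[X in (X - _)%N](sum_cnt f) [X in (X - _)%N](bigD1 j) //= addKn. Qed.

Lemma rkD1 f j : rk f = ((0 < cnt f j) + \sum_(k | k != j) (0 < cnt f k))%N.
Proof. exact: bigD1. Qed.

Lemma rk_le_m f : (rk f <= m)%N.
Proof. by rewrite -(sum_cnt f) sum_gt0_le. Qed.

Lemma rk_le_n f : (rk f <= n)%N.
Proof. by rewrite -[n]card_ord -sum1_card leq_sum // => j _; case: (0 < cnt f j)%N. Qed.

Lemma exists_hit f : (0 < m)%N -> exists j, (0 < cnt f j)%N.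
Proof.
move=> m_gt0; apply/existsP; apply: contraTT m_gt0; rewrite negb_exists => /forallP miss.
rewrite -eqn0Ngt -[X in X == 0%N](sum_cnt f) big1 // => j _.
by move: (miss j); rewrite lt0n negbK => /eqP.
Qed.

Lemma rk_gt0 f : (0 < m)%N -> (0 < rk f)%N.
Proof. by case/(exists_hit f) => j hit; rewrite (rkD1 f j) hit. Qed.

Lemma cnt_le_subn f j k : k != j -> (cnt f k <= m - cnt f j)%N.
Proof. by move=> k_neq; rewrite -sum_cnt_neq (bigD1 k) //= leq_addr. Qed.

Lemma rk_le_subn f j : (rk f <= (m - cnt f j).+1)%N.
Proof.
rewrite (rkD1 f j) -sum_cnt_neq -[X in (_ <= X)%N]add1n.
by apply: leq_add; [case: (0 < cnt f j)%N | apply: sum_gt0_le].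
Qed.

Lemma rk_eq1 f : (0 < m)%N -> (rk f == 1%N) = [exists j, cnt f j == m].
Proof.
move=> m_gt0; apply/sum_nat_eq1/existsP => [[j [_ hit miss]] | [j /eqP cnt_m]].
  exists j; rewrite -[X in _ == X](sum_cnt f) (bigD1 j) //= big1 ?addn0 // => k k_neq.
  by move: (miss k k_neq isT); case: (cnt f k).
exists j; split => //; first by rewrite cnt_m m_gt0.
by move=> k k_neq _; move: (cnt_le_subn f k_neq); rewrite cnt_m subnn leqn0 => /eqP ->.
Qed.

Lemma cnt_le_rk1 f j : (0 < m)%N -> (cnt f j <= m.-1 + (rk f == 1%N))%N.
Proof.
move=> m_gt0; rewrite rk_eq1 //; case: (eqVneq (cnt f j) m) => [cnt_m|cnt_neq].
  rewrite cnt_m (_ : [exists _, _] = true) ?addn1 ?prednK //.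
  by apply/existsP; exists j; rewrite cnt_m.
by apply: leq_trans (leq_addr _ _); rewrite -ltnS prednK // ltn_neqAle cnt_neq cnt_le.
Qed.

Lemma cnt_eq_rk1 f j : (1 < m)%N -> (m.-1 <= cnt f j)%N ->
  cnt f j = (m.-1 + (rk f == 1%N))%N.
Proof.
move=> m_gt1 cnt_ge; have m_gt0 : (0 < m)%N by apply: ltnW.
rewrite rk_eq1 //; case: existsP => [[k /eqP cnt_k] | no_full].
  have -> : j = k.
    apply: contraTeq cnt_ge => /(cnt_le_subn f); rewrite cnt_k subnn leqn0 => /eqP ->.
    by rewrite -ltnNge -ltnS prednK.
  by rewrite cnt_k addn1 prednK.
apply/eqP; rewrite addn0 eqn_leq cnt_ge andbT -ltnS prednK // ltn_neqAle cnt_le andbT.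
by apply/eqP => cnt_m; apply: no_full; exists j; rewrite cnt_m.
Qed.

Lemma rk_eq_m f : (forall j, cnt f j <= 1)%N -> rk f = m.
Proof.
move=> cnt_le1; rewrite -(sum_cnt f); apply: eq_bigr => j _.
by move: (cnt_le1 j); case: (cnt f j) => [|[]].
Qed.

Lemma rk_eq_n f : (forall j, 0 < cnt f j)%N -> rk f = n.
Proof.
by move=> hit; rewrite /rk (eq_bigr (fun=> 1%N)) ?sum1_card ?card_ord // => j _; rewrite hit.
Qed.

Lemma rk_ge_gamma (R : realType) (c : 'I_n -> R) f : (forall j, 0 <= c j) ->
  (forall j, Num.floor (c j) <= (cnt f j)%:Z <= Num.ceil (c j)) ->
  (#|[set j | Num.floor (c j) != 0]|%:Z +
     Num.max (m%:Z - \sum_(j | Num.floor (c j) != 0) Num.ceil (c j)) 0 <= (rk f)%:Z).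
Proof.
move=> c_ge0 cnt_round.
have hit j : Num.floor (c j) != 0 -> (0 < cnt f j)%N.
  have /andP[fl_le _] := cnt_round j; have : 0 <= Num.floor (c j) by rewrite floor_ge0.
  lia.
have le1 j : Num.floor (c j) == 0 -> (cnt f j <= 1)%N.
  rewrite floor_eq add0r => /andP[_ /ltW c_le1]; have /andP[_ le_ceil] := cnt_round j.
  have : Num.ceil (c j) <= 1 by rewrite ceil_le_int.
  lia.
have rkE : rk f = (#|[set j | Num.floor (c j) != 0]| +
                   \sum_(j | Num.floor (c j) == 0) cnt f j)%N.
  rewrite /rk (bigID (fun j => Num.floor (c j) != 0)) /= card_sumb big_mkcond /=.
  congr (_ + _)%N.
    by apply: eq_bigr => j _; rewrite inE; case: ifP => // /hit ->.
  by apply: eq_big => j; rewrite negbK // => /le1; case: (cnt f j) => [|[]].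
have sum_le : (\sum_(j | Num.floor (c j) != 0) cnt f j)%:Z <=
              \sum_(j | Num.floor (c j) != 0) Num.ceil (c j).
  by rewrite -natz natr_sum ler_sum // => j _; rewrite natz; case/andP: (cnt_round j).
have := sum_cnt f; rewrite (bigID (fun j => Num.floor (c j) != 0)) /=.
under [X in (_ + X)%N]eq_bigl do rewrite negbK.
rewrite rkE; move: sum_le.
set K := #|_|; set C := \sum_(j | _) Num.ceil _.
set A := (\sum_(j | _) _)%N; set B := (\sum_(j | _) _)%N.
lia.
Qed.

End Counts.

Section DetMatrix.
Variables (R : realType) (m n : nat).
Implicit Types (f : detmap m n) (l : {ffun detmap m n -> R}).

Lemma colsum_detmx f j : colsum (detmx R f) j = (cnt f j)%:R.
Proof.
rewrite /colsum /cnt card_sumb natr_sum; apply: eq_bigr => i _.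
by rewrite mxE inE.
Qed.

(* detmx f = A *m sel, where sel selects the outputs hit by f: sel is row-free
   and A has a left inverse. *)
Lemma rank_detmx f : \rank (detmx R f) = rk f.
Proof.
pose S := [set j | (0 < cnt f j)%N].
have rkE : rk f = #|S| by rewrite card_sumb; apply: eq_bigr => j _; rewrite inE.
have S_f x : f x \in S by rewrite inE; apply/card_gt0P; exists x; rewrite inE.
pose sel : 'M[R]_(#|S|, n) := \matrix_(k, y) (enum_val k == y)%:R.
pose A : 'M[R]_(m, #|S|) := \matrix_(x, k) (f x == enum_val k)%:R.
have factor : detmx R f = A *m sel.
  apply/matrixP => x y; rewrite !mxE (bigD1 (enum_rank_in (S_f x) (f x))) //=.
  rewrite !mxE enum_rankK_in // eqxx mul1r big1 ?addr0 // => k k_neq; rewrite !mxE.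
  suff /negbTE -> : f x != enum_val k by rewrite mul0r.
  apply: contra k_neq => /eqP fx; apply/eqP/enum_val_inj.
  by rewrite enum_rankK_in.
have sel_free : row_free sel.
  apply/row_freeP; exists sel^T; apply/matrixP => k k'; rewrite !mxE.
  rewrite (bigD1 (enum_val k)) //= !mxE eqxx mul1r big1 ?addr0 => [|y y_neq].
    by rewrite (inj_eq enum_val_inj) eq_sym.
  by rewrite !mxE eq_sym (negbTE y_neq) mul0r.
have /fin_all_exists [g gP] : forall k : 'I_#|S|, exists x, f x = enum_val k.
  move=> k; have := enum_valP k.
  by rewrite inE => /card_gt0P [x]; rewrite inE => /eqP; exists x.
pose C : 'M[R]_(#|S|, m) := \matrix_(k, x) (x == g k)%:R.
have CA : C *m A = 1%:M.
  apply/matrixP => k k'; rewrite !mxE (bigD1 (g k)) //= !mxE eqxx mul1r big1 ?addr0.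
    by rewrite gP (inj_eq enum_val_inj).
  by move=> x x_neq; rewrite !mxE (negbTE x_neq) mul0r.
apply/eqP; rewrite factor mxrankMfree // rkE eqn_leq rank_leq_col /=.
by rewrite -[X in (X <= _)%N](mxrank1 R #|S|) -CA mxrankM_maxr.
Qed.

End DetMatrix.

Section Distributions.
Variables (R : realType) (m n : nat).
Implicit Types (X : 'M[R]_(m, n)) (f g : detmap m n) (l : {ffun detmap m n -> R})
  (h k : detmap m n -> R).

Definition mean l h : R := \sum_f l f * h f.

Lemma ler_mean l h k : is_distr l -> (forall f, l f != 0 -> h f <= k f) ->
  mean l h <= mean l k.
Proof.
case=> l_ge0 _ h_le; apply: ler_sum => f _.
by have [->|/h_le] := eqVneq (l f) 0; rewrite ?mul0r // => /ler_wpM2l; apply.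
Qed.

Lemma eq_mean l h k : (forall f, l f != 0 -> h f = k f) -> mean l h = mean l k.
Proof.
by move=> h_eq; apply: eq_bigr => f _; have [->|/h_eq ->] := eqVneq (l f) 0; rewrite ?mul0r.
Qed.

Lemma mean_affine l (a b : R) h :
  is_distr l -> mean l (fun f => a + b * h f) = a + b * mean l h.
Proof.
case=> _ l_sum; rewrite /mean mulr_sumr; under eq_bigr do rewrite mulrDr mulrCA.
by rewrite big_split /= -mulr_suml l_sum mul1r.
Qed.

Lemma mean_addr l (a : R) h : is_distr l -> mean l (fun f => a + h f) = a + mean l h.
Proof.
case=> _ l_sum; rewrite /mean; under eq_bigr do rewrite mulrDr.
by rewrite big_split /= -mulr_suml l_sum mul1r.
Qed.

Lemma mean_subr l (a : R) h : is_distr l -> mean l (fun f => a - h f) = a - mean l h.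
Proof.
case=> _ l_sum; rewrite /mean; under eq_bigr do rewrite mulrBr.
by rewrite sumrB -mulr_suml l_sum mul1r.
Qed.

Lemma mean_cst l (a : R) : is_distr l -> mean l (fun=> a) = a.
Proof. by case=> _ l_sum; rewrite /mean -mulr_suml l_sum mul1r. Qed.

Lemma colsum_Lambda X l j : Lambda X l -> colsum X j = mean l (fun f => (cnt f j)%:R).
Proof.
case=> _ ->; rewrite /colsum /mean; under eq_bigr do rewrite summxE.
rewrite exchange_big; apply: eq_bigr => f _.
by rewrite -colsum_detmx /colsum mulr_sumr; apply: eq_bigr => i _; rewrite mxE.
Qed.

Definition delta_dist f : {ffun detmap m n -> R} := [ffun g => (g == f)%:R].

Lemma Lambda_delta f : Lambda (detmx R f) (delta_dist f).
Proof.
have sum_delta (V : lmodType R) (h : detmap m n -> V) : \sum_g delta_dist f g *: h g = h f.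
  rewrite (bigD1 f) //= ffunE eqxx scale1r big1 ?addr0 // => g /negbTE g_neq.
  by rewrite ffunE g_neq scale0r.
split; [split|]; last by rewrite sum_delta.
  by move=> g; rewrite ffunE ler0n.
by have := sum_delta R^o (fun=> 1); under eq_bigr do rewrite /GRing.scale /= mulr1.
Qed.

Lemma delta_dist_supp f g : delta_dist f g != 0 -> g = f.
Proof. by apply: contraNeq => /negbTE g_neq; rewrite ffunE g_neq. Qed.

Definition mix_dist (p : R) l1 l2 : {ffun detmap m n -> R} :=
  [ffun f => p * l1 f + (1 - p) * l2 f].

Lemma Lambda_mix X1 X2 l1 l2 p : 0 <= p <= 1 -> Lambda X1 l1 -> Lambda X2 l2 ->
  Lambda (p *: X1 + (1 - p) *: X2) (mix_dist p l1 l2).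
Proof.
case/andP => p_ge0 p_le1 [[l1_ge0 l1_sum] ->] [[l2_ge0 l2_sum] ->].
have q_ge0 : 0 <= 1 - p by rewrite subr_ge0.
split; [split|].
- by move=> f; rewrite ffunE addr_ge0 ?mulr_ge0 ?l1_ge0 ?l2_ge0.
- under eq_bigr do rewrite ffunE.
  by rewrite big_split /= -!mulr_sumr l1_sum l2_sum !mulr1 addrC subrK.
- rewrite !scaler_sumr -big_split /=; apply: eq_bigr => f _.
  by rewrite ffunE !scalerA -scalerDl.
Qed.

Lemma mix_dist_supp p l1 l2 f : mix_dist p l1 l2 f != 0 -> l1 f != 0 \/ l2 f != 0.
Proof.
rewrite ffunE; have [->|] := eqVneq (l1 f) 0; last by left.
by have [->|] := eqVneq (l2 f) 0; [rewrite !mulr0 addr0 eqxx | right].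
Qed.

End Distributions.

Section Decomposition.
Variables (R : realType) (m n : nat) (lo hi : 'I_n -> int).
Implicit Types (X D : 'M[R]_(m, n)) (f : detmap m n).

Definition feasible X :=
  [/\ forall i j, 0 <= X i j, forall i, \sum_j X i j = 1 &
      forall j, (lo j)%:~R <= colsum X j <= (hi j)%:~R].

Definition respects f := forall j, lo j <= (cnt f j)%:Z <= hi j.

Lemma feasible_int_detmx X : feasible X -> (forall i j, X i j \is a Num.int) ->
  exists2 f, X = detmx R f & respects f.
Proof.
case=> X_ge0 X_row X_col X_int.
have X01 i j : X i j = (X i j != 0)%:R.
  have X_le1 : X i j <= 1 by rewrite -(X_row i) (bigD1 j) //= lerDl sumr_ge0.
  have /intrP [k Xk] := X_int i j; move: (X_ge0 i j) X_le1.
  rewrite Xk -[0]/(0%:~R) -[1]/(1%:~R) !ler_int => k_ge0 k_le1.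
  have [->|->] : k = 0 \/ k = 1 by lia.
    by rewrite mulr0z eqxx.
  by rewrite mulr1z oner_eq0.
have /fin_all_exists [g gP] : forall i, exists j, [set y | X i y != 0] = [set j].
  move=> i; apply/cards1P.
  rewrite -(@pnatr_eq1 R) card_sumb natr_sum -[X in _ == X](X_row i).
  by apply/eqP/eq_bigr => j _; rewrite inE -X01.
have X_det : X = detmx R [ffun i => g i].
  apply/matrixP => i j; rewrite mxE ffunE X01.
  by move/setP/(_ j): (gP i); rewrite !inE => ->; rewrite eq_sym.
exists [ffun i => g i] => // j.
by have := X_col j; rewrite X_det colsum_detmx pmulrn !ler_int.
Qed.

Definition coord X (k : 'I_m * 'I_n + 'I_n) : R :=
  match k with inl e => X e.1 e.2 | inr j => colsum X j end.

Definition fracs X := [set k | coord X k \notin Num.int].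

Lemma coordD X D t k : coord (X + t *: D) k = coord X k + t * coord D k.
Proof.
case: k => [e|j] /=; first by rewrite !mxE.
by rewrite /colsum mulr_sumr -big_split; apply: eq_bigr => i _; rewrite !mxE.
Qed.

Lemma coordN D k : coord (- D) k = - coord D k.
Proof.
case: k => [e|j] /=; first by rewrite mxE.
by rewrite /colsum -sumrN; apply: eq_bigr => i _; rewrite mxE.
Qed.

Definition direction X D :=
  [/\ D != 0, forall i, \sum_j D i j = 0 & forall k, coord D k != 0 -> k \in fracs X].

Lemma directionN X D : direction X D -> direction X (- D).
Proof.
case=> D_neq0 D_row D_supp; split.
- by rewrite oppr_eq0.
- by move=> i; under eq_bigr do rewrite mxE; rewrite sumrN D_row oppr0.
- by move=> k; rewrite coordN oppr_eq0; apply: D_supp.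
Qed.

Lemma perturb X D : feasible X -> direction X D ->
  exists2 t, 0 < t & feasible (X + t *: D) /\ (#|fracs (X + t *: D)| < #|fracs X|)%N.
Proof.
case=> X_ge0 X_row X_col [/matrix0Pn [i0 [j0 D_ij]] D_row D_supp].
pose T k := time_to_int (coord X k) (coord D k).
case: (@arg_minP _ _ _ (inl (i0, j0)) (fun k => coord D k != 0) T D_ij) => k k_act T_min.
set t := T k.
have frac_k : k \in fracs X := D_supp k k_act.
have t_gt0 : 0 < t by apply: time_to_int_gt0 => //; move: frac_k; rewrite inE.
have round k' : (Num.floor (coord X k'))%:~R <= coord (X + t *: D) k'
                  <= (Num.ceil (coord X k'))%:~R.
  rewrite coordD; have [->|D_neq] := eqVneq (coord D k') 0.
    by rewrite mulr0 addr0 floor_le ceil_ge.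
  by apply: time_to_int_floor_ceil; rewrite (ltW t_gt0) T_min.
have fracs_sub : fracs (X + t *: D) \subset fracs X.
  apply/fintype.subsetP => k'; rewrite !inE coordD; apply: contraNN => int_k'.
  suff -> : coord D k' = 0 by rewrite mulr0 addr0.
  by apply/eqP; apply: contraTT int_k' => /D_supp; rewrite inE.
exists t => //; split; first split.
- move=> i j; have /andP[+ _] := round (inl (i, j)); apply: le_trans.
  by rewrite ler0z floor_ge0; apply: X_ge0.
- move=> i; under eq_bigr do rewrite !mxE.
  by rewrite big_split /= -mulr_sumr X_row D_row mulr0 addr0.
- move=> j; have /andP[lo_le le_hi] := X_col j; have /andP[fl cl] := round (inr j).
  rewrite (le_trans _ fl) ?(le_trans cl) //= ler_int ?ceil_le_int ?floor_ge_int //.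
- apply: proper_card; apply/properP; split => //; exists k => //.
  by rewrite inE negbK coordD time_to_int_int.
Qed.

Definition frac_entries X := [set e : 'I_m * 'I_n | X e.1 e.2 \notin Num.int].
Definition row_fracs X i := [set j | X i j \notin Num.int].
Definition col_fracs X j := [set i | X i j \notin Num.int].

Lemma card_frac_entries_row X : #|frac_entries X| = (\sum_i #|row_fracs X i|)%N.
Proof.
rewrite card_sumb; under [RHS]eq_bigr do rewrite card_sumb.
by rewrite pair_bigA; apply: eq_bigr => -[i j] _; rewrite !inE.
Qed.

Lemma card_frac_entries_col X : #|frac_entries X| = (\sum_j #|col_fracs X j|)%N.
Proof.
rewrite card_sumb; under [RHS]eq_bigr do rewrite card_sumb.
by rewrite exchange_big pair_bigA; apply: eq_bigr => -[i j] _; rewrite !inE.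
Qed.

Lemma exists_kernel X (keep : pred 'I_n) :
  (\sum_i (0 < #|row_fracs X i|) + \sum_(j | keep j) (0 < #|col_fracs X j|)
     < #|frac_entries X|)%N ->
  exists D, [/\ D != 0, forall i j, D i j != 0 -> X i j \notin Num.int,
                forall i, \sum_j D i j = 0 & forall j, keep j -> colsum D j = 0].
Proof.
move=> count.
pose c (q : 'I_m + 'I_n) (e : 'I_m * 'I_n) : R :=
  match q with inl i => (e.1 == i)%:R | inr j => (e.2 == j)%:R end.
pose E : pred ('I_m + 'I_n) := fun q => match q with
  | inl i => (0 < #|row_fracs X i|)%N | inr j => keep j && (0 < #|col_fracs X j|)%N end.
have E_lt : (#|E| < #|[pred e | e \in frac_entries X]|)%N.
  suff -> : #|E| = (\sum_i (0 < #|row_fracs X i|) +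
                     \sum_(j | keep j) (0 < #|col_fracs X j|))%N by [].
  rewrite card_sumb big_sumType [X in _ = (_ + X)%N]big_mkcond; congr (_ + _)%N.
  by apply: eq_bigr => j _ /=; rewrite unfold_in /=; case: (keep j).
have [v [v_out [e v_e] v_sol]] := nontrivial_solution c E_lt.
have v_int i j : X i j \is a Num.int -> v (i, j) = 0.
  by move=> int_ij; apply: v_out; rewrite !inE negbK.
pose D := \matrix_(i, j) v (i, j).
have sum_pair (G : 'I_m * 'I_n -> R) : \sum_e G e = \sum_i \sum_j G (i, j).
  by rewrite pair_bigA; apply: eq_bigr => -[].
exists D; split.
- by apply/matrix0Pn; exists e.1, e.2; rewrite mxE -surjective_pairing.
- by move=> i j; rewrite mxE; apply: contraNN => /v_int ->.
- move=> i; under eq_bigr do rewrite mxE.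
  have [row0 | row_gt0] := posnP #|row_fracs X i|.
    by apply: big1 => j _; apply: v_int; move/card0_eq/(_ j): row0; rewrite !inE => /negbFE.
  rewrite -[RHS](v_sol (inl i)) // sum_pair (bigD1 i) //= [X in _ = _ + X]big1 ?addr0.
    by apply: eq_bigr => j _; rewrite eqxx mul1r.
  by move=> i' /negbTE i'_neq; apply: big1 => j _; rewrite i'_neq mul0r.
- move=> j keep_j; rewrite /colsum; under eq_bigr do rewrite mxE.
  have [col0 | col_gt0] := posnP #|col_fracs X j|.
    by apply: big1 => i _; apply: v_int; move/card0_eq/(_ i): col0; rewrite !inE => /negbFE.
  have E_j : inr j \in E by rewrite unfold_in /= keep_j.
  rewrite -[RHS](v_sol _ E_j) sum_pair exchange_big (bigD1 j) //= [X in _ = _ + X]big1 ?addr0.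
    by apply: eq_bigr => i _; rewrite eqxx mul1r.
  by move=> j' /negbTE j'_neq; apply: big1 => i _; rewrite j'_neq mul0r.
Qed.

Lemma exists_direction X i0 j0 : feasible X -> X i0 j0 \notin Num.int ->
  exists D, direction X D.
Proof.
case=> _ X_row _ frac0.
pose tight j := colsum X j \is a Num.int.
(* Every row, and every tight column, meeting the fractional entries meets them at
   least twice, so the equations of the rows and of the tight columns other than j1
   are fewer than the fractional entries. *)
have [j1 [col1_gt0 j1_tight]] : exists j1, (0 < #|col_fracs X j1|)%N /\
    (tight j1 -> forall i j, X i j \notin Num.int -> tight j).
  case: (pickP (fun e : 'I_m * 'I_n => (X e.1 e.2 \notin Num.int) && ~~ tight e.2)).
    move=> [i j] /andP[frac_ij loose_j]; exists j; split; last by rewrite (negbTE loose_j).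
    by apply/card_gt0P; exists i; rewrite inE.
  move=> all_tight; exists j0; split; first by apply/card_gt0P; exists i0; rewrite inE.
  by move=> _ i j frac_ij; move: (all_tight (i, j)); rewrite frac_ij => /negbFE.
pose keep j := (j != j1) && tight j.
have [|D [D_neq0 D_supp D_row D_keep]] := @exists_kernel X keep.
  have rows : (2 * \sum_i (0 < #|row_fracs X i|) <= #|frac_entries X|)%N.
    rewrite card_frac_entries_row; apply: double_sum_gt0_le => i _.
    by apply: nonint_card_neq1; rewrite X_row int_num1.
  have cols : (2 * \sum_(j | keep j) (0 < #|col_fracs X j|) + #|col_fracs X j1|
                 <= #|frac_entries X|)%N.
    rewrite card_frac_entries_col [X in (_ <= X)%N](bigD1 j1) //= [X in (_ <= X)%N]addnC.
    rewrite leq_add2r.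
    apply: leq_trans (double_sum_gt0_le _) _ => [j /andP[_ /nonint_card_neq1 //]|].
    by rewrite [X in (_ <= X)%N](bigID tight) leq_addr.
  lia.
exists D; split => // -[[i j]|j] /=; first by move/D_supp; rewrite inE.
rewrite inE; apply: contraNN => tight_j; apply/eqP.
have [j_eq | j_neq] := eqVneq j j1; last by apply: D_keep; rewrite /keep j_neq.
rewrite {}j_eq in tight_j *.
have col0 k : k != j1 -> colsum D k = 0.
  move=> k_neq; have [tight_k | loose_k] := boolP (tight k).
    by apply: D_keep; rewrite /keep k_neq.
  apply: big1 => i _; apply/eqP; apply: contraTT loose_k => /D_supp /(j1_tight tight_j).
  by rewrite negbK.
have : \sum_k colsum D k = 0 by rewrite /colsum exchange_big big1.
by rewrite (bigD1 j1) //= big1 ?addr0 // => k; apply: col0.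
Qed.

Theorem feasible_decomp X : feasible X ->
  exists l, Lambda X l /\ forall f, l f != 0 -> respects f.
Proof.
have [k] := ubnP #|fracs X|; elim: k X => // k IH X fracs_lt X_feas.
have [X_int | /forallPn [i0 /forallPn [j0 frac0]]] :=
  boolP [forall i, forall j, X i j \is a Num.int].
  have [f -> f_resp] : exists2 f, X = detmx R f & respects f.
    by apply: feasible_int_detmx => // i j; move/forallP/(_ i)/forallP: X_int.
  exists (delta_dist R f); split; first exact: Lambda_delta.
  by move=> g /delta_dist_supp ->.
have [D D_dir] := exists_direction X_feas frac0.
have [t1 t1_gt0 [X1_feas X1_lt]] := perturb X_feas D_dir.
have [t2 t2_gt0 [X2_feas X2_lt]] := perturb X_feas (directionN D_dir).
have [l1 [l1_X1 l1_resp]] := IH _ (leq_trans X1_lt fracs_lt) X1_feas.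
have [l2 [l2_X2 l2_resp]] := IH _ (leq_trans X2_lt fracs_lt) X2_feas.
pose p := t2 / (t1 + t2).
have t12_gt0 : 0 < t1 + t2 by rewrite addr_gt0.
have p_01 : 0 <= p <= 1.
  rewrite /p divr_ge0 ?(ltW t2_gt0) ?(ltW t12_gt0) //= ler_pdivrMr // mul1r; lra.
have X_mix : X = p *: (X + t1 *: D) + (1 - p) *: (X + t2 *: - D).
  by apply/matrixP => i j; rewrite !mxE /p; field; rewrite lt0r_neq0.
exists (mix_dist p l1 l2); split; first by rewrite {1}X_mix; apply: Lambda_mix.
by move=> f /mix_dist_supp [/l1_resp | /l2_resp].
Qed.

End Decomposition.

Section Log2.
Variable R : realType.

Lemma ln2_gt0 : 0 < ln (2 : R).
Proof. by rewrite ln_gt0 // ltr1n. Qed.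

Lemma log2_1 : log2 (1 : R) = 0.
Proof. by rewrite /log2 ln1 mul0r. Qed.

Lemma log2_2 : log2 (2 : R) = 1.
Proof. by rewrite /log2 divff // lt0r_neq0 // ln2_gt0. Qed.

Lemma ler_log2 (x y : R) : 0 < x -> x <= y -> log2 x <= log2 y.
Proof.
move=> x_gt0 x_le_y; rewrite /log2 ler_pM2r ?invr_gt0 ?ln2_gt0 //.
by rewrite ler_ln ?posrE // (lt_le_trans x_gt0 x_le_y).
Qed.

Lemma log2_ge0 (x : R) : 1 <= x -> 0 <= log2 x.
Proof. by move=> x_ge1; apply: divr_ge0; [apply: ln_ge0 | apply/ltW/ln2_gt0]. Qed.

Lemma log2_natS_le (k : nat) : log2 (k.+1%:R : R) <= k%:R.
Proof.
rewrite /log2 ler_pdivrMr ?ln2_gt0 // mulr_natl -lnXn //.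
by rewrite ler_ln ?posrE ?exprn_gt0 // -natrX ler_nat ltn_expl.
Qed.

Lemma log2M (x y : R) : 0 < x -> 0 < y -> log2 (x * y) = log2 x + log2 y.
Proof. by move=> x_gt0 y_gt0; rewrite /log2 lnM ?posrE // mulrDl. Qed.

End Log2.

Section SupInfImage.
Variables (R : realType) (T : Type) (A : set T) (F : T -> R).

Lemma le_sup_image u x : (forall y, A y -> F y <= u) -> A x -> F x <= sup [set F y | y in A].
Proof.
move=> F_le Ax; apply: sup_upper_bound; last by exists x.
by split; [exists (F x), x | exists u => _ [y Ay <-]; apply: F_le].
Qed.

Lemma sup_image_le u x : (forall y, A y -> F y <= u) -> A x -> sup [set F y | y in A] <= u.
Proof.
move=> F_le Ax; apply: ge_sup; first by exists (F x), x.
by move=> _ [y Ay <-]; apply: F_le.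
Qed.

Lemma inf_image_eq v : (forall y, A y -> v <= F y) -> (exists2 x, A x & F x <= v) ->
  inf [set F y | y in A] = v.
Proof.
move=> le_F [x Ax Fx_le]; apply/eqP; rewrite eq_le; apply/andP; split.
  apply: le_trans Fx_le; apply: ge_inf; last by exists x.
  by exists v => _ [y Ay <-]; apply: le_F.
apply: lb_le_inf; first by exists (F x), x.
by move=> _ [y Ay <-]; apply: le_F.
Qed.

End SupInfImage.

Lemma card_classic_set (T : finType) (P : pred T) :
  #|[set j | P j]%classic| = #|[set j | P j]|.
Proof. by apply: eq_card => j; rewrite inE; apply/idP/idP; rewrite in_setE. Qed.

Section RankStatistics.
Variables (R : realType) (m n : nat).
Implicit Types (l : {ffun detmap m n -> R}) (f : detmap m n).

Lemma C11E l : C11 l = mean l (fun f => log2 (rk f)%:R).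
Proof. by apply: eq_bigr => f _; rewrite rank_detmx. Qed.

Lemma PrankE l r : Prank l r = mean l (fun f => (rk f == r)%:R).
Proof.
rewrite /Prank big_mkcond; apply: eq_bigr => f _; rewrite rank_detmx.
by case: (rk f == r); rewrite ?mulr1 ?mulr0.
Qed.

Lemma Prank_ge0 l r : is_distr l -> 0 <= Prank l r.
Proof. by case=> l_ge0 _; apply: sumr_ge0. Qed.

Lemma Prank_le1 l r : is_distr l -> Prank l r <= 1.
Proof.
move=> l_d; rewrite PrankE -[X in _ <= X](mean_cst 1 l_d); apply: ler_mean => // f _.
by case: (rk f == r); rewrite ?ler01.
Qed.

Lemma C11_le_log2m l : (0 < m)%N -> is_distr l -> C11 l <= log2 m%:R.
Proof.
move=> m_gt0 l_d; rewrite C11E -[X in _ <= X](mean_cst _ l_d); apply: ler_mean => // f _.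
by apply: ler_log2; rewrite ?ltr0n ?rk_gt0 // ler_nat rk_le_m.
Qed.

Lemma C11_ge_Prank1 l : (0 < m)%N -> is_distr l -> 1 - Prank l 1 <= C11 l.
Proof.
move=> m_gt0 l_d; rewrite C11E PrankE -mean_subr //.
apply: ler_mean => // f _; have := rk_gt0 f m_gt0.
case: (rk f) => [|[|k]] //= _; first by rewrite log2_1; lra.
by rewrite mulr0n subr0 -[X in X <= _](log2_2 R); apply: ler_log2; rewrite ?ltr0n ?ler_nat.
Qed.

Lemma C11_minn_le2 l : (0 < m)%N -> (minn m n <= 2)%N -> is_distr l ->
  C11 l = 1 - Prank l 1.
Proof.
move=> m_gt0 o_le2 l_d; rewrite C11E PrankE -mean_subr //.
apply: eq_mean => f _.
have : (rk f <= 2)%N by rewrite (leq_trans _ o_le2) // leq_min rk_le_m rk_le_n.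
have := rk_gt0 f m_gt0; case: (rk f) => [|[|[|k]]] //= _ _; first by rewrite log2_1; lra.
by rewrite log2_2; lra.
Qed.

Lemma C11_le_Prank_minn l : let o := minn m n in (1 < o)%N -> is_distr l ->
  C11 l <= log2 (o.-1)%:R + Prank l o * log2 (o%:R / (o.-1)%:R).
Proof.
move=> o o_gt1 l_d; have o_gt0 : (0 < o)%N by apply: ltnW.
have m_gt0 : (0 < m)%N by move: o_gt0; rewrite leq_min => /andP[].
have o1_gt0 : 0 < (o.-1)%:R :> R by rewrite ltr0n -ltnS prednK.
rewrite C11E PrankE mulrC -mean_affine //; apply: ler_mean => // f _.
have rk_le_o : (rk f <= o)%N by rewrite leq_min rk_le_m rk_le_n.
have [-> | rk_neq] := eqVneq (rk f) o.
  have oR_gt0 : 0 < o%:R :> R by rewrite ltr0n.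
  by rewrite mulr1 -log2M ?divr_gt0 // mulrCA divff ?mulr1 ?lt0r_neq0.
rewrite /= mulr0n mulr0 addr0; apply: ler_log2; first by rewrite ltr0n rk_gt0.
by rewrite ler_nat -ltnS prednK // ltn_neqAle rk_neq rk_le_o.
Qed.

End RankStatistics.

Section Channel.
Variables (R : realType) (m n : nat) (W : 'M[R]_(m, n)).
Hypotheses (W_chan : is_channel W) (m_gt1 : (1 < m)%N) (n_gt0 : (0 < n)%N).
Implicit Types (l : {ffun detmap m n -> R}) (f : detmap m n).

Let m_gt0 : (0 < m)%N. Proof. exact: ltnW. Qed.
Let m_pred : m%:R = (m.-1)%:R + 1 :> R. Proof. by rewrite natr1 prednK. Qed.

Definition rounds f :=
  forall j, Num.floor (colsum W j) <= (cnt f j)%:Z <= Num.ceil (colsum W j).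

Lemma exists_round_decomp : exists l, Lambda W l /\ forall f, l f != 0 -> rounds f.
Proof.
by case: W_chan => W_ge0 W_row; apply: feasible_decomp; split=> // j; rewrite floor_le ceil_ge.
Qed.

Lemma exists_argmax_colsum : exists js, gmax W = colsum W js.
Proof.
have [js _ g_js] := @eq_bigmax _ _ _ 0 (Ordinal n_gt0) xpredT (colsum W) erefl
  (fun j _ => sumr_ge0 _ (fun i _ => W_chan.1 i j)).
by exists js; exact: g_js.
Qed.

Lemma colsum_le_gmax j : colsum W j <= gmax W.
Proof. exact: le_bigmax. Qed.

Lemma Prank1_ge l : Lambda W l -> Num.max (gmax W - m%:R + 1) 0 <= Prank l 1.
Proof.
move=> l_W; have l_d : is_distr l by case: l_W.
rewrite ge_max Prank_ge0 // andbT; have [js ->] := exists_argmax_colsum.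
have : colsum W js <= (m.-1)%:R + Prank l 1.
  rewrite (colsum_Lambda js l_W) PrankE -mean_addr //; apply: ler_mean => // f _.
  by rewrite -natrD ler_nat cnt_le_rk1.
have := m_pred; lra.
Qed.

Lemma Prank1_round l : Lambda W l -> (forall f, l f != 0 -> rounds f) ->
  Prank l 1 = Num.max (gmax W - m%:R + 1) 0.
Proof.
move=> l_W l_round; have l_d : is_distr l by case: l_W.
have [js g_js] := exists_argmax_colsum.
have [g_ge | g_lt] := lerP (m.-1)%:R (gmax W).
  have cnt_ge f : l f != 0 -> (m.-1 <= cnt f js)%N.
    move/l_round/(_ js)/andP => [fl_le _]; rewrite -(@lez_nat) (le_trans _ fl_le) //.
    by rewrite floor_ge_int -g_js -pmulrn.
  have := colsum_Lambda js l_W; rewrite -g_js.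
  rewrite (eq_mean (k := fun f => (m.-1)%:R + (rk f == 1%N)%:R)) => [|f /cnt_ge].
    by rewrite mean_addr // -PrankE => g_eq; rewrite max_l; have := m_pred; lra.
  by move/(cnt_eq_rk1 m_gt1) ->; rewrite natrD.
have rk_neq1 f : l f != 0 -> (rk f == 1%N) = false.
  move/l_round => round_f; rewrite rk_eq1 //; apply/existsP => -[j /eqP cnt_m].
  have /andP[_ le_ceil] := round_f j.
  have : Num.ceil (colsum W j) <= (m.-1)%:Z.
    by rewrite ceil_le_int -pmulrn (le_trans (colsum_le_gmax j)) ?ltW.
  by move: le_ceil; rewrite cnt_m; lia.
rewrite PrankE (eq_mean (k := fun=> 0)) => [|f /rk_neq1 -> //].
by rewrite mean_cst // max_r //; have := m_pred; lra.
Qed.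

Lemma Pmin1E : Pmin W 1 = Num.max (gmax W - m%:R + 1) 0.
Proof.
apply: inf_image_eq => [l /Prank1_ge //|].
by have [l [l_W l_round]] := exists_round_decomp; exists l => //; rewrite Prank1_round.
Qed.

Lemma le_C11bar l : Lambda W l -> C11 l <= C11bar W.
Proof. by apply: le_sup_image => l' [l'_d _]; apply: C11_le_log2m. Qed.

Lemma C11bar_le u : (forall l, Lambda W l -> C11 l <= u) -> C11bar W <= u.
Proof. by move=> C11_le; have [l [l_W _]] := exists_round_decomp; apply: sup_image_le l_W. Qed.

Lemma C11bar_eq_1_sub_Pmin1 : (0 < Pmin W 1 \/ m = 2%N \/ n = 2%N) -> C11bar W = 1 - Pmin W 1.
Proof.
move=> cond; apply/eqP; rewrite eq_le; apply/andP; split.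
  apply: C11bar_le => l l_W; have l_d : is_distr l by case: l_W.
  have P1_le : Pmin W 1 <= Prank l 1 by rewrite Pmin1E Prank1_ge.
  case: cond => [P1_gt0 | small]; last first.
    rewrite C11_minn_le2 //; first lra.
    by case: small => ->; rewrite ?geq_minl ?geq_minr.
  have [js g_js] := exists_argmax_colsum.
  have -> : 1 - Pmin W 1 = m%:R - colsum W js.
    by move: P1_gt0; rewrite Pmin1E -g_js lt_max ltxx orbF => /ltW/max_idPl ->; lra.
  rewrite C11E (colsum_Lambda js l_W) -mean_subr //.
  apply: ler_mean => // f _; rewrite -natrB ?cnt_le //.
  apply: le_trans (log2_natS_le _ _); apply: ler_log2; first by rewrite ltr0n rk_gt0.
  by rewrite ler_nat rk_le_subn.
have [l [l_W l_round]] := exists_round_decomp.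
apply: le_trans (le_C11bar l_W); rewrite Pmin1E -(Prank1_round l_W l_round).
by apply: C11_ge_Prank1 => //; case: l_W.
Qed.

Lemma log2_gamma_le_C11bar : log2 (gammaW W)%:~R <= C11bar W.
Proof.
have [l [l_W l_round]] := exists_round_decomp; have l_d : is_distr l by case: l_W.
apply: le_trans (le_C11bar l_W); rewrite C11E -[X in X <= _](mean_cst _ l_d).
apply: ler_mean => // f /l_round.
move=> /(rk_ge_gamma (fun j => sumr_ge0 _ (fun i _ => W_chan.1 i j))) gamma_le.
have [gamma_gt0 | gamma_le0] := ltP 0 (gammaW W).
  apply: ler_log2; first by rewrite ltr0z.
  by rewrite pmulrn ler_int (le_trans _ gamma_le) // /gammaW card_classic_set.
(* [ln] vanishes on nonpositive reals *)
rewrite [X in X <= _]/log2 ln0 ?mul0r ?lerz0 //.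
by apply: log2_ge0; rewrite ler1n; apply: rk_gt0 m_gt0.
Qed.

Lemma C11bar_le_Pmax : let o := minn m n in (1 < o)%N ->
  C11bar W <= log2 (o.-1)%:R + Pmax W o * log2 (o%:R / (o.-1)%:R).
Proof.
move=> o o_gt1; apply: C11bar_le => l l_W; have l_d : is_distr l by case: l_W.
apply: le_trans (C11_le_Prank_minn o_gt1 l_d) _; rewrite lerD2l ler_wpM2r //.
  apply: log2_ge0; rewrite ler_pdivlMr ?mul1r ?ler_nat ?leq_pred // ltr0n -ltnS prednK //.
  exact: ltnW.
have Prank_le1_W l' : Lambda W l' -> Prank l' o <= 1 by case=> l'_d _; apply: Prank_le1.
exact: (le_sup_image Prank_le1_W l_W).
Qed.

Lemma C11bar_colsum_le1 : (forall j, colsum W j <= 1) -> C11bar W = log2 m%:R.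
Proof.
move=> colsum_le1; apply/eqP; rewrite eq_le.
rewrite C11bar_le => [|l [l_d _]]; last exact: C11_le_log2m.
have [l [l_W l_round]] := exists_round_decomp; apply: le_trans (le_C11bar l_W).
rewrite C11E -[X in X <= _](mean_cst _ l_W.1).
apply: ler_mean => [|f /l_round round_f]; first by case: l_W.
rewrite rk_eq_m // => j; have /andP[_ le_ceil] := round_f j.
have : Num.ceil (colsum W j) <= 1 by rewrite ceil_le_int.
by move: le_ceil; lia.
Qed.

Lemma C11bar_colsum_ge1 : (forall j, 1 <= colsum W j) -> C11bar W = log2 n%:R.
Proof.
move=> colsum_ge1; apply/eqP; rewrite eq_le.
rewrite C11bar_le => [|l [l_d _]]; last first.
  rewrite C11E -[X in _ <= X](mean_cst _ l_d); apply: ler_mean => // f _.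
  by apply: ler_log2; rewrite ?ltr0n ?rk_gt0 // ler_nat rk_le_n.
have [l [l_W l_round]] := exists_round_decomp; apply: le_trans (le_C11bar l_W).
rewrite C11E -[X in X <= _](mean_cst _ l_W.1).
apply: ler_mean => [|f /l_round round_f]; first by case: l_W.
rewrite rk_eq_n // => j; have /andP[fl_le _] := round_f j.
have : 1 <= Num.floor (colsum W j) by rewrite floor_ge_int.
by move: fl_le; lia.
Qed.

End Channel.

Theorem theorem2 (R : realType) (m n : nat) (W : 'M[R]_(m, n)) :
  (2 <= m)%N -> (2 <= n)%N -> is_channel W ->
  let P1 := Pmin W 1 in
  let o := minn m n in
  [/\ P1 = Num.max (gmax W - m%:R + 1) 0,
      (0 < P1 \/ m = 2%N \/ n = 2%N) -> C11bar W = 1 - P1,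
      ~ (0 < P1 \/ m = 2%N \/ n = 2%N) ->
        log2 (gammaW W)%:~R <= C11bar W /\
        C11bar W <= log2 (o.-1)%:R + Pmax W o * log2 (o%:R / (o.-1)%:R),
      (m <= n)%N -> (forall j, colsum W j <= 1) -> C11bar W = log2 m%:R
    & (n <= m)%N -> (forall j, 1 <= colsum W j) -> C11bar W = log2 n%:R].
Proof.
move=> m_ge2 n_ge2 W_chan P1 o.
have n_gt0 : (0 < n)%N by apply: ltnW.
split => [||_|_|_].
- exact: Pmin1E.
- exact: C11bar_eq_1_sub_Pmin1.
- split; first exact: log2_gamma_le_C11bar.
  by apply: C11bar_le_Pmax => //; rewrite leq_min m_ge2.
- exact: C11bar_colsum_le1.
- exact: C11bar_colsum_ge1.
Qed.
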